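(* Let $a=\{a_1,\dots,a_m\}$ be a set of positive integers and $n\ge 0$. There exist a function $P:\mathbb{Z}_{\ge 0}\to\mathbb{Q}$ and an integer $N$ such that for every $s\ge1$ and all integers $k_1,\dots,k_s\ge N$, the number of $n$-element independent sets of the disjoint union $\overline{F}(a,k_1)+\overline{F}(a,k_2)+\cdots+\overline{F}(a,k_s)$ equals $P(k_1+\cdots+k_s)$. In other words, this number depends only on $a$, $n$ and $\sum_ik_i$.
   Context: For a set $a=\{a_1,\dots,a_m\}$ of positive integers and a positive integer $k$, $F(a,k)$ is the simple graph with vertex set $\mathbb{Z}/k\mathbb{Z}$ in which distinct vertices $i,j$ are adjacent if and only if $i-j\equiv a_r\pmod k$ or $j-i\equiv a_r\pmod k$ for some $1\le r\le m$. $\overline{F}(a,k)$ is the graph obtained from $F(a,k)$ by adding $k$ new vertices $v'$, one for each vertex $v$ of $F(a,k)$, with a single new edge joining $v'$ to $v$ (so each new vertex has degree $1$). $G_1+\cdots+G_s$ denotes the disjoint union of graphs. An independent set is a set of vertices no two of which are adjacent. *)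

From mathcomp Require Import all_boot all_order all_algebra.
Set Implicit Arguments. Unset Strict Implicit. Unset Printing Implicit Defensive.

Definition F_adj (a : seq nat) (k : nat) (i j : nat) : bool :=
  (i != j) &&
  has (fun r => ((i + k - j) %% k == r %% k) || ((j + k - i) %% k == r %% k)) a.

(* Adjacency in Fbar(a,k): vertex (v,false) is the original vertex v of F(a,k),
   vertex (v,true) is the new pendant vertex v' joined only to v. *)
Definition Fbar_adj (a : seq nat) (k : nat) (u v : nat * bool) : bool :=
  match u.2, v.2 with
  | false, false => F_adj a k u.1 v.1
  | true, false | false, true => u.1 == v.1
  | true, true => false
  end.

Definition union_vtx (s : nat) (k : 'I_s -> nat) : finType :=
  {i : 'I_s & ('I_(k i) * bool)%type}.

Definition union_adj (a : seq nat) (s : nat) (k : 'I_s -> nat)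
  (x y : union_vtx k) : bool :=
  (tag x == tag y) &&
  Fbar_adj a (k (tag x)) (val (tagged x).1, (tagged x).2)
                         (val (tagged y).1, (tagged y).2).

Definition independent (a : seq nat) (s : nat) (k : 'I_s -> nat)
  (S : {set union_vtx k}) : bool :=
  [forall x in S, forall y in S, ~~ union_adj a x y].

Definition num_indep (a : seq nat) (n s : nat) (k : 'I_s -> nat) : nat :=
  #|[set S : {set union_vtx k} | independent a S && (#|S| == n)]|.

(** Write Q_n(X) for the number of n-element independent sets of a graph that
    avoid the vertex set X.  For v ∉ X, sorting the sets by whether they contain
    v gives Q_{n+1}(X) = Q_{n+1}(X ∪ {v}) + Q_n(X ∪ N[v]), and double counting
    gives (n+1) Q_{n+1}(∅) = Σ_v Q_n(N[v]).
    In F̄(a,k_1)+⋯+F̄(a,k_s) with every k_i large, a set X described by a finite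
    pattern of offsets around one vertex looks the same wherever it is placed,
    and so does X ∪ N[v] for v in X; iterating the first identity therefore
    writes Q_m(X) as a linear combination of Q_m(∅), …, Q_0(∅) whose
    coefficients depend only on the pattern.  The closed neighbourhood N[v] is
    such a pattern, determined by whether v is an original or a pendant vertex,
    and there are k_1+⋯+k_s vertices of each kind; by induction on n, Q_n(∅) is
    therefore a function of k_1+⋯+k_s. *)

From mathcomp Require Import all_boot all_order all_algebra.
From mathcomp Require Import zify.
Set Implicit Arguments. Unset Strict Implicit. Unset Printing Implicit Defensive.
Import GRing.Theory Num.Theory.

Section IndependentSets.
Variables (T : finType) (e : rel T).

Definition indep (S : {set T}) := [forall x in S, forall y in S, ~~ e x y].
Definition nbhd v := [set y | e v y || e y v].
Definition count_indep n (X : {set T}) :=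
  #|[set S : {set T} | [&& indep S, #|S| == n & [disjoint S & X]]]|.

Lemma indepP (S : {set T}) :
  reflect (forall x y, x \in S -> y \in S -> ~~ e x y) (indep S).
Proof.
apply: (iffP forallP) => [H x y xS yS | H x].
  by have /implyP/(_ xS)/forallP/(_ y)/implyP/(_ yS) := H x.
by apply/implyP => xS; apply/forallP => y; apply/implyP => yS; apply: H.
Qed.

Lemma disjointP (A B : {set T}) :
  reflect (forall x, x \in A -> x \notin B) [disjoint A & B].
Proof. by rewrite disjoint_subset; apply: (iffP subsetP) => h x /h; rewrite inE. Qed.

Lemma count_indep0 (X : {set T}) : count_indep 0 X = 1%N.
Proof.
rewrite /count_indep -(cards1 (set0 : {set T})); apply: eq_card => S.
rewrite !inE cards_eq0; apply/and3P/eqP => [[_ /eqP -> _] // | ->].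
by split; [apply/indepP => x y; rewrite inE | | apply/disjointP => x; rewrite inE].
Qed.

Hypothesis e_irr : irreflexive e.

Lemma count_indep_mem n (X : {set T}) v : v \notin X ->
  #|[set S : {set T} | [&& indep S, #|S| == n.+1, [disjoint S & X] & v \in S]]|
  = count_indep n (v |: (X :|: nbhd v)).
Proof.
move=> vX; rewrite /count_indep.
set B := [set S : {set T} | [&& indep S, #|S| == n & [disjoint S & v |: (X :|: nbhd v)]]].
have inj : {in B &, injective (fun S => v |: S)}.
  move=> S1 S2; rewrite !inE => /and3P [_ _ /disjointP d1] /and3P [_ _ /disjointP d2] E.
  apply/setP => x; have := congr1 (fun S : {set T} => x \in S) E; rewrite /= !inE.
  case: (eqVneq x v) => [-> | //] _.
  by apply/idP/idP => [/d1 | /d2]; rewrite !inE eqxx.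
rewrite -(card_in_imset inj); apply: eq_card => S; rewrite inE.
apply/idP/imsetP.
  case/and4P => /indepP iS /eqP cS /disjointP dS vS.
  exists (S :\ v); last by rewrite setD1K.
  rewrite inE; apply/and3P; split.
  - by apply/indepP => x y; rewrite !inE => /andP [_ xS] /andP [_ yS]; apply: iS.
  - by move: cS; rewrite (cardsD1 v S) vS add1n => -[->].
  apply/disjointP => x; rewrite !inE => /andP [xv xS].
  rewrite !negb_or xv (dS x xS) /=; apply/andP; split; apply/negP => E.
    by have := iS v x vS xS; rewrite E.
  by have := iS x v xS vS; rewrite E.
case=> S'; rewrite inE => /and3P [/indepP iS /eqP cS /disjointP dS] ->.
have vS' : v \notin S' by apply/negP => /dS; rewrite !inE eqxx.
have nS x : x \in S' -> [&& x != v, x \notin X, ~~ e v x & ~~ e x v].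
  by move/dS; rewrite !inE !negb_or; case: (x != v) => //=; case: (x \notin X).
rewrite setU11 cardsU1 vS' cS eqxx andbT /=; apply/andP; split.
  apply/indepP => x y; rewrite !inE => /orP [/eqP -> | xS] /orP [/eqP -> | yS].
  - by rewrite e_irr.
  - by case/and4P: (nS y yS).
  - by case/and4P: (nS x xS).
  - exact: iS.
apply/disjointP => x; rewrite !inE => /orP [/eqP -> // | xS].
by case/and4P: (nS x xS).
Qed.

Lemma count_indep_split n (X : {set T}) v : v \notin X ->
  count_indep n.+1 X = (count_indep n.+1 (v |: X) + count_indep n (v |: (X :|: nbhd v)))%N.
Proof.
move=> vX; rewrite -count_indep_mem // /count_indep.
set A := [set S : {set T} | [&& indep S, #|S| == n.+1 & [disjoint S & X]]].
rewrite -(cardsID [set S : {set T} | v \in S] A) addnC; congr (_ + _)%N;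
  apply: eq_card => S; rewrite !inE; last by rewrite -!andbA.
have -> : [disjoint S & v |: X] = (v \notin S) && [disjoint S & X].
  by rewrite disjoint_sym disjoints_subset subUset sub1set inE -disjoints_subset disjoint_sym.
by case: (v \notin S); rewrite /= ?andbF.
Qed.

Lemma count_indep_double_count n :
  (n.+1 * count_indep n.+1 set0 = \sum_v count_indep n (v |: nbhd v))%N.
Proof.
under eq_bigr => v _ do rewrite -[nbhd v]set0U -count_indep_mem ?inE //.
rewrite /count_indep.
set A := [set S : {set T} | [&& indep S, #|S| == n.+1 & [disjoint S & set0]]].
have E v : #|[set S : {set T} | [&& indep S, #|S| == n.+1, [disjoint S & set0] & v \in S]]|
   = (\sum_(S in A) (v \in S))%N.
  rewrite -sum1_card big_mkcond [RHS]big_mkcond /=; apply: eq_bigr => S _.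
  by rewrite !inE; case: (v \in S); rewrite ?andbT ?andbF; case: ifP.
under eq_bigr => v _ do rewrite E.
rewrite exchange_big /= mulnC -sum1_card big_distrl /=.
apply: eq_bigr => S; rewrite inE => /and3P [_ /eqP cS _].
by rewrite mul1n -cS -sum1_card big_mkcond; apply: eq_bigr => i _; case: (i \in S).
Qed.

End IndependentSets.

Lemma eqz_mod_small (K : nat) (u v : int) :
  (`|u - v| < K)%N -> (u == v %[mod K])%Z = (u == v).
Proof.
move=> lt; rewrite eqz_mod_dvd dvdzE /=.
apply/idP/eqP => [|->]; last by rewrite subrr dvdn0.
case: (eqVneq u v) => // neq /dvdn_leq; rewrite absz_gt0 subr_eq0 neq => /(_ isT).
lia.
Qed.

Lemma eqz_mod_subr (K : int) (u v w : int) :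
  (u == v + w %[mod K])%Z = (v == u - w %[mod K])%Z.
Proof. by rewrite !eqz_mod_dvd -[in RHS]rpredN; congr (_ %| _)%Z; lia. Qed.

Lemma eqz_mod_shift (K : int) (q r z e : int) : (q == r %[mod K])%Z ->
  (z == r + e %[mod K])%Z = (z == q + e %[mod K])%Z.
Proof. by move/eqP => h; rewrite -[((r + e) %% K)%Z]modzDml -h modzDml. Qed.

Lemma eqn_mod_addBz (K x y d : nat) : (y <= K)%N ->
  ((x + K - y) %% K == d %% K)%N = (x%:Z == y%:Z + d%:Z %[mod K])%Z.
Proof.
move=> yK; rewrite -eqz_nat -!modz_nat.
have -> : ((x + K - y)%N%:Z = x%:Z - y%:Z + K%:Z)%R by lia.
by rewrite modzDr !eqz_mod_dvd; congr (_ %| _)%Z; lia.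
Qed.

Section Cells.
Variables (s : nat) (k : 'I_s -> nat).

Definition pos (x : union_vtx k) : nat := val (tagged x).1.
Definition layer (x : union_vtx k) : bool := (tagged x).2.

(* The cell (o, b) relative to the base point p of component i consists of the
   vertex of layer b (true for the pendant copies) at position p + o mod k i. *)
Definition in_cell (i : 'I_s) (p : nat) (c : int * bool) (x : union_vtx k) :=
  [&& tag x == i, layer x == c.2 & ((pos x)%:Z == p%:Z + c.1 %[mod k i])%Z].

Definition cells i p (A : seq (int * bool)) : {set union_vtx k} :=
  [set x | has (fun c => in_cell i p c x) A].

Lemma cells_nil i p : cells i p [::] = set0.
Proof. by apply/setP => x; rewrite !inE. Qed.

Lemma cells_cons i p c A : cells i p (c :: A) = [set x | in_cell i p c x] :|: cells i p A.
Proof. by apply/setP => x; rewrite !inE. Qed.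

Lemma cells_cat i p A B : cells i p (A ++ B) = cells i p A :|: cells i p B.
Proof. by apply/setP => x; rewrite !inE has_cat. Qed.

Lemma cells_cons_mem i p c A : c \in A -> cells i p (c :: A) = cells i p A.
Proof.
move=> cA; rewrite cells_cons; apply/setUidPr/subsetP => x; rewrite !inE => h.
by apply/hasP; exists c.
Qed.

Lemma in_cell1 i p c : (0 < k i)%N -> exists v, [set x | in_cell i p c x] = [set v].
Proof.
move=> ki; set r := ((p%:Z + c.1) %% (k i)%:Z)%Z.
have r_ge0 : (0 <= r)%R by apply: modz_ge0; rewrite eqz_nat -lt0n.
have rK : (`|r| < k i)%N.
  have : (r < (k i)%:Z)%R by apply: ltz_pmod; rewrite ltz_nat.
  lia.
exists (Tagged (fun j => ('I_(k j) * bool)%type) (Ordinal rK, c.2)).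
apply/setP => -[j [z b]]; rewrite !inE.
apply/idP/eqP => [/and3P [/= /eqP ji /eqP bc hz] | ->]; last first.
  by rewrite /in_cell /pos /layer /= !eqxx /= gez0_abs // /r modz_mod.
subst j; move: bc hz; rewrite /layer /pos /= => <- hz.
suff -> : z = Ordinal rK by [].
apply/val_inj/eqP; rewrite /= -eqz_nat gez0_abs // /r -(eqP hz) modz_small //.
by rewrite ltz_nat ltn_ord.
Qed.

Lemma in_cell_inj i p c c' x : (`|c.1 - c'.1| < k i)%N ->
  in_cell i p c x -> in_cell i p c' x -> c = c'.
Proof.
case: c c' => o b [o' b'] /= lt /and3P [_ /eqP lb h] /and3P [_ /eqP lb' h'].
move: lb lb' => /= <- <-; congr (_, _); apply/eqP.
by rewrite -(eqz_mod_small lt) -(eqz_modDl p%:Z) -(eqP h) -(eqP h').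
Qed.

Lemma sum_layer (R : nzSemiRingType) (f : bool -> R) :
  (\sum_(v : union_vtx k) f (layer v) = (\sum_i k i)%N%:R * (f false + f true))%R.
Proof.
rewrite (partition_big (fun v : union_vtx k => tag v) xpredT) //=.
rewrite natr_sum big_distrl /=; apply: eq_bigr => i _.
have -> : (\sum_(v : union_vtx k | tag v == i) f (layer v) =
    \sum_(q : ('I_(k i) * bool)%type) f q.2)%R.
  rewrite (big_tag (fun i (q : ('I_(k i) * bool)%type) => f q.2) i).
  apply: eq_big => // v /eqP vi; rewrite (untagE _ _ vi).
  by case: v vi => j q /= ji; subst j.
rewrite -(pair_bigA _ (fun _ b => f b)) /=.
under eq_bigr => q _ do rewrite big_bool /=.
by rewrite sumr_const card_ord mulr_natl addrC.
Qed.

End Cells.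

Section Adjacency.
Variable a : seq nat.
Hypothesis a_gt0 : all (fun d => 0 < d)%N a.

Definition wmax := (\max_(d <- a) d)%N.

Lemma mem_wmax d : d \in a -> (0 < d <= wmax)%N.
Proof.
by move=> da; rewrite (allP a_gt0 d da) (@leq_bigmax_seq _ a xpredT id d).
Qed.

Lemma F_adj_sym K : symmetric (F_adj a K).
Proof.
by move=> y z; rewrite /F_adj eq_sym; congr (_ && _); apply: eq_has => r; apply: orbC.
Qed.

Lemma F_adj_mod (K : nat) (z q : 'I_K) : (wmax < K)%N ->
  F_adj a K z q =
  has (fun d => (z%:Z == q%:Z + d%:Z %[mod K]) || (z%:Z == q%:Z - d%:Z %[mod K]))%Z a.
Proof.
move=> wK; rewrite /F_adj.
have small d : d \in a ->
    (z%:Z == q%:Z + d%:Z %[mod K])%Z || (z%:Z == q%:Z - d%:Z %[mod K])%Z -> z != q.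
  move=> /mem_wmax da; apply: contraTN => /eqP ->.
  by rewrite !eqz_mod_small ?negb_or; [apply/andP; split; apply/eqP | lia | lia]; lia.
under eq_has => d do rewrite !eqn_mod_addBz ?(ltnW (ltn_ord _)) // [X in _ || X]eqz_mod_subr.
by apply/andP/idP => [[] // | /hasP [d da h]]; split; [exact: small d da h | apply/hasP; exists d].
Qed.

Definition nbhd_offsets (b : bool) : seq (int * bool) :=
  if b then [:: (0%R, false)]
  else (0%R, true) :: [seq ((d%:Z)%R, false) | d <- a] ++ [seq ((- d%:Z)%R, false) | d <- a].

Definition nbhd_cells (c : int * bool) : seq (int * bool) :=
  [seq ((c.1 + o.1)%R, o.2) | o <- nbhd_offsets c.2].

Lemma nbhd_cells_bound c o : o \in nbhd_cells c -> (`|o.1| <= `|c.1| + wmax)%N.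
Proof.
case/mapP => -[e b] + -> /=; rewrite /nbhd_offsets; case: c.2 => /=.
  by rewrite inE => /eqP [-> _]; lia.
rewrite inE mem_cat => /orP [/eqP [-> _] | /orP [] /mapP [d /mem_wmax da [-> _]]]; lia.
Qed.

Section Union.
Variables (s : nat) (k : 'I_s -> nat).

Lemma union_adj_irr : irreflexive (@union_adj a s k).
Proof. by case=> i [q []]; rewrite /union_adj /Fbar_adj /= ?andbF // /F_adj !eqxx. Qed.

Lemma union_adj_sym : symmetric (@union_adj a s k).
Proof.
case=> i [q b] [j [z c]]; rewrite /union_adj /=.
case: eqP => [ij | ne]; last by case: eqP => // /esym /ne.
subst j; rewrite eqxx /Fbar_adj /=.
by case: b; case: c; rewrite //= 1?F_adj_sym // eq_sym.
Qed.

Lemma num_indep_count n : num_indep a n k = count_indep (@union_adj a s k) n set0.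
Proof.
by apply: eq_card => S; rewrite !inE -setI_eq0 setI0 eqxx andbT.
Qed.

Lemma nbhd_in_cell i p c v : (wmax < k i)%N -> in_cell i p c v ->
  nbhd (@union_adj a s k) v = cells k i p (nbhd_cells c).
Proof.
case: v => j [q b]; case: c => o b' wK /and3P [/= /eqP ji /eqP bb hq]; subst j b'.
apply/setP => -[j [z c]]; rewrite !inE union_adj_sym orbb /union_adj /=.
case: (eqVneq j i) => [ji | ji] /=; last first.
  by apply/esym/hasPn => e _; rewrite /in_cell /= (negbTE ji).
subst j; rewrite /cells /nbhd_cells has_map /in_cell /pos /layer /=.
have shift e : (z%:Z == p%:Z + (o + e) %[mod k i])%Z = (z%:Z == q%:Z + e %[mod k i])%Z.
  by rewrite addrA; apply: eqz_mod_shift hq.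
have zq : (z%:Z == q%:Z + 0 %[mod k i])%Z = (z == q).
  by rewrite eqz_mod_small ?addr0 ?eqz_nat //; have := ltn_ord z; have := ltn_ord q; lia.
under eq_has => e do rewrite /= eqxx shift.
clear hq; case: b; case: c;
  rewrite /Fbar_adj /= ?has_cat ?has_map /preim /= ?zq ?has_pred0 ?orbF //; try exact: eq_sym.
by rewrite F_adj_mod // -has_predU.
Qed.

Lemma count_cells_split m i p c A : (wmax < k i)%N -> c \notin A ->
  {in A, forall c', `|c.1 - c'.1| < k i}%N ->
  count_indep (@union_adj a s k) m.+1 (cells k i p A) =
  (count_indep (@union_adj a s k) m.+1 (cells k i p (c :: A)) +
   count_indep (@union_adj a s k) m (cells k i p (c :: nbhd_cells c ++ A)))%N.
Proof.
move=> wK cA near.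
have [v hv] := in_cell1 p c (leq_ltn_trans (leq0n _) wK).
have vc : in_cell i p c v by have := set11 v; rewrite -hv inE.
have vA : v \notin cells k i p A.
  apply/negP; rewrite inE => /hasP [c' c'A vc'].
  by move: cA; rewrite (in_cell_inj (near c' c'A) vc vc') c'A.
rewrite !cells_cons cells_cat hv -(nbhd_in_cell wK vc) [nbhd _ v :|: _]setUC.
by rewrite (count_indep_split union_adj_irr m vA).
Qed.

Lemma closed_nbhd_cells (v : union_vtx k) : (wmax < k (tag v))%N ->
  v |: nbhd (@union_adj a s k) v =
  cells k (tag v) (pos v) ((0%R, layer v) :: nbhd_cells (0%R, layer v)).
Proof.
move=> wK; have vc : in_cell (tag v) (pos v) (0%R, layer v) v.
  by rewrite /in_cell !eqxx addr0 /=.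
have [v' hv'] := in_cell1 (pos v) (0%R, layer v) (leq_ltn_trans (leq0n _) wK).
have vv' : v = v' by apply/set1P; rewrite -hv' inE.
by rewrite cells_cons hv' -vv' -(nbhd_in_cell wK vc).
Qed.

End Union.

(* Each step of the recursion in [count_cells_lincomb] enlarges the offsets by
   at most [wmax]; distinct cells must stay distinct vertices ([2 D < k i]) and
   neighbourhoods must be recognised ([wmax < k i]). *)
Definition cells_bound m D := (2 * (D + m * wmax)).+1.

Lemma count_cells_lincomb m (A : seq (int * bool)) (D : nat) :
  all (fun c => `|c.1| <= D)%N A ->
  exists beta : nat -> rat, forall s (k : 'I_s -> nat),
    (forall i, cells_bound m D < k i)%N -> forall i p,
    ((count_indep (@union_adj a s k) m (cells k i p A))%:R =
      \sum_(j < m.+1) beta j * (count_indep (@union_adj a s k) (m - j)%N set0)%:R)%R.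
Proof.
elim: m A D => [|m IHm] A D.
  by exists (fun=> 1%R) => s k _ i p; rewrite big_ord1 !count_indep0 mul1r.
elim: A => [_ | c A IHA /= /andP [cD AD]].
  exists (fun j => ((j == 0)%:R)%R) => s k _ i p.
  by rewrite cells_nil big_ord_recl big1 => [|j _]; rewrite ?mul1r ?addr0 ?mul0r ?subn0.
have [beta1 Hbeta1] := IHA AD.
have [cA | cA] := boolP (c \in A).
  by exists beta1 => s k kD i p; rewrite cells_cons_mem // Hbeta1.
have nextD : all (fun c' => `|c'.1| <= D + wmax)%N (c :: nbhd_cells c ++ A).
  rewrite /= all_cat; apply/and3P; split; first by lia.
    by apply/allP => c' /nbhd_cells_bound /=; lia.
  by apply: sub_all AD => c' /=; lia.
have [beta2 Hbeta2] := IHm _ _ nextD.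
exists (fun j => beta1 j - (if j is j'.+1 then beta2 j' else 0))%R => s k kD i p.
have kD' i' : (cells_bound m (D + wmax) < k i')%N.
  by have := kD i'; rewrite /cells_bound; lia.
have := kD i; rewrite /cells_bound => kiD.
have near : {in A, forall c', `|c.1 - c'.1| < k i}%N.
  by move=> c' /(allP AD) /=; lia.
have wK : (wmax < k i)%N by lia.
have := count_cells_split m p wK cA near.
move/(congr1 (fun n => n%:R : rat)); rewrite natrD => /eqP; rewrite -subr_eq => /eqP <-.
rewrite Hbeta1 // Hbeta2 //; under [RHS]eq_bigr => j _ do rewrite mulrBl.
rewrite sumrB; congr (_ - _)%R.
rewrite [RHS]big_ord_recl /= mul0r add0r.
by apply: eq_bigr => j _; rewrite /bump /= add1n subSS.
Qed.

Lemma count_closed_nbhd_lincomb m : exists beta : bool -> nat -> rat,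
  forall s (k : 'I_s -> nat), (forall i, cells_bound m wmax < k i)%N ->
  forall v : union_vtx k,
    ((count_indep (@union_adj a s k) m (v |: nbhd (@union_adj a s k) v))%:R =
      \sum_(j < m.+1) beta (layer v) j * (count_indep (@union_adj a s k) (m - j)%N set0)%:R)%R.
Proof.
have bound b : all (fun c => `|c.1| <= wmax)%N ((0%R, b) :: nbhd_cells (0%R, b)).
  by apply/allP => c; rewrite inE => /predU1P [-> // | /nbhd_cells_bound].
have [beta0 H0] := count_cells_lincomb m (bound false).
have [beta1 H1] := count_cells_lincomb m (bound true).
exists (fun b => if b then beta1 else beta0) => s k km v.
have wK : (wmax < k (tag v))%N by have := km (tag v); rewrite /cells_bound; lia.
by rewrite closed_nbhd_cells //; case: (layer v); [apply: H1 | apply: H0].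
Qed.

Lemma count_indep_depends_on_sum n : exists (P : nat -> nat -> rat) (N : nat),
  forall j, (j <= n)%N -> forall s (k : 'I_s -> nat), (forall i, N <= k i)%N ->
    ((count_indep (@union_adj a s k) j set0)%:R)%R = P j (\sum_i k i)%N.
Proof.
elim: n => [|n [P [N HP]]].
  by exists (fun _ _ => 1%R), 0%N => j; rewrite leqn0 => /eqP -> s k _; rewrite count_indep0.
have [beta Hbeta] := count_closed_nbhd_lincomb n.
pose c b K := (\sum_(j < n.+1) beta b j * P (n - j)%N K)%R.
exists (fun j K => if j == n.+1 then (K%:R * (c false K + c true K) / n.+1%:R)%R else P j K).
exists (maxn N (cells_bound n wmax).+1) => j jn s k kN.
have [-> | jn'] := eqVneq j n.+1; last by apply: HP => [|i]; [lia | have := kN i; lia].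
have closed v : ((count_indep (@union_adj a s k) n (v |: nbhd (@union_adj a s k) v))%:R =
    c (layer v) (\sum_i k i)%N)%R.
  rewrite Hbeta => [|i]; last by have := kN i; lia.
  by apply: eq_bigr => j' _; rewrite HP // => [|i]; [exact: leq_subr | have := kN i; lia].
have := count_indep_double_count (@union_adj_irr s k) n; move/(congr1 (fun x => x%:R : rat)).
rewrite natrM natr_sum; under eq_bigr => v _ do rewrite closed.
rewrite (@sum_layer s k _ (fun b => c b (\sum_i k i)%N)) /= => <-.
by rewrite mulrAC mulfV ?mul1r // pnatr_eq0.
Qed.

End Adjacency.

Theorem corollary3p6 (a : seq nat) (n : nat) :
  uniq a -> all (fun x => 0 < x) a ->
  exists (P : nat -> rat) (N : nat),
    forall (s : nat) (k : 'I_s -> nat),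
      0 < s -> (forall i, N <= k i) ->
      ((num_indep a n k)%:R : rat) = P (\sum_(i < s) k i)%N.
Proof.
move=> _ a_gt0; have [P [N HP]] := count_indep_depends_on_sum a_gt0 n.
by exists (P n), N => s k _ kN; rewrite num_indep_count; apply: HP.
Qed.
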